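(* Let $\rho\colon\mathcal{F}\to[\Lambda]^\omega$ with $\mathcal{F}\subseteq[\Omega]^\omega$ be a partition regular function. Consider the conditions: (1) $\mathrm{FinBW}(\rho)$ coincides with the class of all finite (Hausdorff) spaces; (2) $\omega+1\notin\mathrm{FinBW}(\rho)$, where the ordinal $\omega+1$ carries the order topology; (3) $\rho\notin P^-(\Lambda)$; (4) $\rho_{\mathrm{FIN}^2}\leq_K\rho$. Then (1), (2), (3) are equivalent and (4) implies them. If moreover $\rho\in(S_1)$, then all four conditions are equivalent.
   Context: All topological spaces are Hausdorff. An ideal on a nonempty set $X$ is a family $\mathcal{I}\subseteq\mathcal{P}(X)$ with $\emptyset\in\mathcal{I}$, $X\notin\mathcal{I}$, closed under finite unions and subsets, containing all finite subsets of $X$; $\mathcal{I}^+=\mathcal{P}(X)\setminus\mathcal{I}$. Partition regular function: $\Lambda,\Omega$ countably infinite, $\mathcal{F}$ a nonempty family of infinite subsets of $\Omega$ with $F\setminus K\in\mathcal{F}$ for $F\in\mathcal{F}$, $K$ finite; $\rho\colon\mathcal{F}\to[\Lambda]^\omega$ is partition regular if (M) $E\subseteq F\Rightarrow\rho(E)\subseteq\rho(F)$; (R) if $F\in\mathcal{F}$ and $\rho(F)=A\cup B$ then some $E\in\mathcal{F}$ has $\rho(E)\subseteq A$ or $\rho(E)\subseteq B$; (S) for every $E\in\mathcal{F}$ there is $F\in\mathcal{F}$, $F\subseteq E$, such that every $a\in\rho(F)$ satisfies $a\notin\rho(F\setminus K)$ for some finite $K\subseteq\Omega$. $\mathcal{I}_\rho=\{A\subseteq\Lambda:\forall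 F\in\mathcal{F}\ \rho(F)\not\subseteq A\}$. For an ideal $\mathcal{I}$ on $\Lambda$, $\rho_{\mathcal{I}}\colon\mathcal{I}^+\to[\Lambda]^\omega$, $\rho_{\mathcal{I}}(A)=A$ (with $\Omega=\Lambda$). $\rho$-convergence: for $f\colon\Lambda\to X$ and $F\in\mathcal{F}$, $f\restriction\rho(F)$ $\rho$-converges to $x\in X$ if for every neighborhood $U$ of $x$ there is a finite $K\subseteq\Omega$ with $f[\rho(F\setminus K)]\subseteq U$. $\mathrm{FinBW}(\rho)$ is the class of spaces $X$ such that for every $f\colon\Lambda\to X$ there is $F\in\mathcal{F}$ such that $f\restriction\rho(F)$ $\rho$-converges to some point of $X$. Katětov order: for partition regular $\rho_i\colon\mathcal{F}_i\to[\Lambda_i]^\omega$, $\mathcal{F}_i\subseteq[\Omega_i]^\omega$, write $\rho_2\leq_K\rho_1$ if there is $f\colon\Lambda_1\to\Lambda_2$ such that for every $F_1\in\mathcal{F}_1$ there is $F_2\in\mathcal{F}_2$ such that for every finite $K_1\subseteq\Omega_1$ there is a finite $K_2\subseteq\Omega_2$ with $\rho_2(F_2\setminus K_2)\subseteq f[\rho_1(F_1\setminus K_1)]$. $\mathrm{FIN}^2$ is the ideal on $\omega\times\omega$: $A\in\mathrm{FIN}^2$ iff there is $i_0$ such that $\{j:(i,j)\in A\}$ is finite for all $i\geq i_0$. $\rho\in P^-(\Lambda)$ means: for every decreasing sequence $\Lambda=A_0\supseteq A_1\supseteq\dots$ with $A_n\setminus A_{n+1}\in\mathcal{I}_\rho$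 for all $n$, there is $F\in\mathcal{F}$ such that for each $n$ there is a finite $K\subseteq\Omega$ with $\rho(F\setminus K)\subseteq A_n$. $\rho\in(S_1)$ means: for every $E\in\mathcal{F}$ there is $F\in\mathcal{F}$, $F\subseteq E$, such that for every $A\in\mathcal{I}_\rho$ there is $G\in\mathcal{F}$ with $\rho(G)\subseteq\rho(F)\setminus A$ and for every finite $K\subseteq\Omega$ there is a finite $L\subseteq\Omega$ with $\rho(G\setminus L)\subseteq\rho(F\setminus K)$. *)

From HB Require Import structures.
From mathcomp Require Import all_boot all_order all_algebra.
From mathcomp Require Import all_classical all_reals all_analysis.
Set Implicit Arguments. Unset Strict Implicit. Unset Printing Implicit Defensive.
Import Order.TTheory.
Local Open Scope classical_set_scope.

(* Elements [Some n] are the finite ordinals n < omega, [None] is omega itself. *)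
Definition omega1 : Type := option nat.
HB.instance Definition _ := Choice.on omega1.

Definition omega1_le (x y : omega1) : bool :=
  match x, y with
  | _, None => true
  | None, Some _ => false
  | Some m, Some n => (m <= n)%N
  end.
Definition omega1_lt (x y : omega1) : bool := (y != x) && omega1_le x y.
Definition omega1_meet (x y : omega1) : omega1 := if omega1_lt x y then x else y.
Definition omega1_join (x y : omega1) : omega1 := if omega1_lt x y then y else x.

Lemma omega1_le_anti : antisymmetric omega1_le.
Proof.
case=> [m|] [n|] //=.
by move=> /andP[h1 h2]; congr Some; apply/eqP; rewrite eqn_leq h1 h2.
Qed.
Lemma omega1_le_trans : transitive omega1_le.
Proof. by case=> [m|] [n|] [p|] //=; apply: leq_trans. Qed.
Lemma omega1_le_total : total omega1_le.
Proof. by case=> [m|] [n|] //=; apply: leq_total. Qed.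

Fact omega1_display : Order.disp_t. Proof. exact: Order.Disp tt tt. Qed.

HB.instance Definition _ := Order.isOrder.Build omega1_display omega1
  (fun _ _ => erefl) (fun _ _ => erefl) (fun _ _ => erefl)
  omega1_le_anti omega1_le_trans omega1_le_total.

Definition omega_plus_one : Type := order_topology omega1.

Section PRF.
Variables (Lambda Omega : Type).
Variables (F : set (set Omega)) (rho : set Omega -> set Lambda).

Definition partition_regular : Prop :=
  [/\ F !=set0,
      (forall E, F E -> infinite_set E),
      (forall E K, F E -> finite_set K -> F (E `\` K)) &
      (forall E, F E -> infinite_set (rho E))] /\
  [/\
      (forall E G, F E -> F G -> E `<=` G -> rho E `<=` rho G),
      (forall G A B, F G -> rho G = A `|` B ->
         exists E, F E /\ (rho E `<=` A \/ rho E `<=` B)) &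
      (forall E, F E -> exists G, [/\ F G, G `<=` E &
         forall a, rho G a -> exists K, finite_set K /\ ~ rho (G `\` K) a])].

Definition I_rho (A : set Lambda) : Prop := forall G, F G -> ~ (rho G `<=` A).

Definition rho_converges {X : topologicalType} (f : Lambda -> X) (G : set Omega)
  (x : X) : Prop :=
  forall U, nbhs x U ->
    exists K : set Omega, finite_set K /\ f @` rho (G `\` K) `<=` U.

Definition FinBW (X : topologicalType) : Prop :=
  forall f : Lambda -> X, exists G, F G /\ exists x : X, rho_converges f G x.

Definition P_minus : Prop :=
  forall A : nat -> set Lambda,
    A 0%N = setT -> (forall n, A n.+1 `<=` A n) ->
    (forall n, I_rho (A n `\` A n.+1)) ->
    exists G, F G /\ forall n, exists K : set Omega,
      finite_set K /\ rho (G `\` K) `<=` A n.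

Definition S1 : Prop :=
  forall E, F E -> exists G, [/\ F G, G `<=` E &
    forall A, I_rho A -> exists H, [/\ F H, rho H `<=` rho G `\` A &
      forall K : set Omega, finite_set K -> exists L : set Omega,
        finite_set L /\ rho (H `\` L) `<=` rho (G `\` K)]].

End PRF.

Definition katetov_le (L1 O1 L2 O2 : Type)
  (F2 : set (set O2)) (rho2 : set O2 -> set L2)
  (F1 : set (set O1)) (rho1 : set O1 -> set L1) : Prop :=
  exists f : L1 -> L2, forall E1, F1 E1 -> exists E2, F2 E2 /\
    forall K1 : set O1, finite_set K1 -> exists K2 : set O2,
      finite_set K2 /\ rho2 (E2 `\` K2) `<=` f @` rho1 (E1 `\` K1).

Definition FIN2 (A : set (nat * nat)) : Prop :=
  exists i0, forall i, (i0 <= i)%N -> finite_set [set j | A (i, j)].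

Definition ideal_plus (L : Type) (I : set (set L)) : set (set L) := ~` I.
Definition rho_ideal (L : Type) (A : set L) : set L := A.

Set Warnings "-notation-overridden,-ambiguous-paths,-notation-incompatible-prefix".
From mathcomp Require Import all_boot all_order all_algebra.
From mathcomp Require Import all_classical all_reals all_analysis.
Import Order.TTheory.
Local Open Scope classical_set_scope.
Set Implicit Arguments. Unset Strict Implicit.

(* By (R), a colouring of Lambda with finitely many colours is constant on some
   rho(E), so finite spaces are in FinBW(rho).  If rho is in P^- and
   f : Lambda -> omega+1, either some fibre f^-1(n) is not in I_rho, and f is
   constant on a rho(E) inside it, or the sets A_n = f^-1[n, omega] satisfy the
   hypotheses of P^- and the resulting E makes f rho-converge to omega.
   Conversely, a sequence (A_n) witnessing that rho is not in P^- cuts Lambda into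
   layers A_n \ A_(n+1), all in I_rho, and a rest, the intersection of the A_n,
   which contains no rho(E).  Composing the layer index with a discrete sequence,
   which every infinite Hausdorff space contains, gives a map with no
   rho-convergent restriction.  A Katetov reduction f : Lambda -> omega x omega
   of rho_FIN^2 yields such a witness, A_n = {l | (f l).1 >= n}.  Under (S_1),
   the layer index paired with an injection of Lambda into omega is such a
   reduction: (S_1) and (S) show that every E in F meets infinitely many layers
   in sets that stay infinite in every tail rho(E \ K), and points picked there
   form a FIN^2-positive set below f[rho(E)]. *)

Lemma nat_finite_bounded (S : set nat) :
  finite_set S -> exists m, forall x, S x -> (x < m)%N.
Proof.
move=> /finite_seqP[s ->]; elim: s => [|a s [m IH]]; first by exists 0%N.
exists (maxn m a.+1) => x /=; rewrite inE => /orP[/eqP->|xs].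
  by rewrite leq_max leqnn orbT.
by rewrite leq_max IH.
Qed.

Lemma nat_unbounded_infinite (S : set nat) :
  (forall j, exists2 x, S x & (j <= x)%N) -> infinite_set S.
Proof.
move=> h /nat_finite_bounded[m hm]; have [x Sx mx] := h m.
by have := hm _ Sx; rewrite ltnNge mx.
Qed.

Lemma rho_converges_cst (Lambda Omega : Type) (rho : set Omega -> set Lambda)
    (X : topologicalType) (f : Lambda -> X) G x :
  (forall l, rho G l -> f l = x) -> rho_converges rho f G x.
Proof.
move=> fx U /nbhs_singleton Ux; exists set0; split; first exact: finite_set0.
by move=> y [l]; rewrite setD0 => /fx -> <-.
Qed.

Section PartitionRegular.
Variables (Lambda Omega : Type) (F : set (set Omega)) (rho : set Omega -> set Lambda).

Definition thin H := forall a, rho H a -> exists K, finite_set K /\ ~ rho (H `\` K) a.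

Definition tail_sub H E := forall K, finite_set K ->
  exists L, finite_set L /\ rho (H `\` L) `<=` rho (E `\` K).

Definition eventually_finite E (Q : set Lambda) :=
  exists K, finite_set K /\ finite_set (rho (E `\` K) `&` Q).

Hypothesis PR : partition_regular F rho.

Lemma F_neq0 : F !=set0. Proof. by case: PR => -[]. Qed.

Lemma F_setD E K : F E -> finite_set K -> F (E `\` K).
Proof. by case: PR => -[] _ _ h _ _; apply: h. Qed.

Lemma rho_neq0 E : F E -> rho E !=set0.
Proof. by case: PR => -[] _ _ _ h _ /h /infinite_setN0. Qed.

Lemma le_rho E G : F E -> F G -> E `<=` G -> rho E `<=` rho G.
Proof. by case: PR => _ [] h _ _; apply: h. Qed.

Lemma le_rho_setD E G K L : F E -> F G -> finite_set K -> finite_set L ->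
  E `<=` G -> K `<=` L -> rho (E `\` L) `<=` rho (G `\` K).
Proof.
move=> FE FG fK fL EG KL; apply: le_rho; [exact: F_setD..|].
by move=> x [Ex nLx]; split; [exact: EG | move/KL].
Qed.

Lemma rho_cover G A B : F G -> rho G `<=` A `|` B ->
  exists E, F E /\ (rho E `<=` A \/ rho E `<=` B).
Proof.
move=> FG GAB; case: PR => _ [] _ split _.
have [|E [FE EAB]] := split G (rho G `&` A) (rho G `&` B) FG.
  by rewrite -setIUr setIidl.
by exists E; split => //; case: EAB => EAB; [left|right]; move=> x /EAB[].
Qed.

Lemma rho_thin E : F E -> exists G, [/\ F G, G `<=` E & thin G].
Proof. by case: PR => _ [] _ _ h; apply: h. Qed.

Lemma I_rho_sub A B : A `<=` B -> I_rho F rho B -> I_rho F rho A.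
Proof. by move=> AB IB G FG GA; apply: (IB G FG); apply: subset_trans GA AB. Qed.

Lemma I_rhoU A B : I_rho F rho A -> I_rho F rho B -> I_rho F rho (A `|` B).
Proof.
move=> IA IB G FG GAB; have [E [FE [EA|EB]]] := rho_cover FG GAB;
  [exact: IA FE EA | exact: IB FE EB].
Qed.

Lemma I_rho0 : I_rho F rho set0.
Proof. by move=> G /rho_neq0[x Gx] /(_ x Gx). Qed.

Lemma monochromatic_of_bounded (h : Lambda -> nat) n : (forall l, (h l < n)%N) ->
  exists E, F E /\ exists k, rho E `<=` h @^-1` [set k].
Proof.
move=> hn; have [G FG] := F_neq0.
have : rho G `<=` [set l | (h l < n)%N] by move=> l _; exact: hn.
elim: n {hn} G FG => [|n IH] G FG Gn.
  by have [x /Gn] := rho_neq0 FG.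
have [|E [FE [En|En]]] := @rho_cover G [set l | (h l < n)%N] (h @^-1` [set n]) FG.
- by move=> l /Gn; rewrite /= ltnS leq_eqVlt => /orP[/eqP|]; [right|left].
- exact: IH FE En.
- by exists E; split => //; exists n.
Qed.

Lemma finite_FinBW (X : topologicalType) : finite_set [set: X] -> FinBW F rho X.
Proof.
move=> /finite_setP[n /pcard_eqP[g]] f.
have [E [FE [k Ek]]] := @monochromatic_of_bounded (fun l => g (f l)) n
  (fun l => @funS _ _ _ _ g (f l) I).
have [l0 El0] := rho_neq0 FE.
exists E; split => //; exists (f l0); apply: rho_converges_cst => l El.
by apply: (@inj _ _ _ g); rewrite ?inE //= (Ek _ El) (Ek _ El0).
Qed.

Lemma thin_avoid_finite H P : F H -> thin H -> finite_set P ->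
  exists K, finite_set K /\ rho (H `\` K) `<=` ~` P.
Proof.
move=> FH thinH fP.
have /choice[K hK] : forall a, exists K, finite_set K /\ (rho H a -> ~ rho (H `\` K) a).
  move=> a; have [/thinH[K [fK hK]]|Ha] := pselect (rho H a); first by exists K.
  by exists set0; split => //; exact: finite_set0.
have fK : finite_set (\bigcup_(a in P) K a).
  by apply: bigcup_finite => // a _; case: (hK a).
exists (\bigcup_(a in P) K a); split => // a Ha Pa; apply: (hK a).2.
- by apply: le_rho (F_setD FH fK) FH _ _ Ha => ? [].
- apply: le_rho_setD (FH) (FH) _ fK _ _ _ Ha => //; first by case: (hK a).
  by move=> x Kx; exists a.
Qed.

Lemma eventually_finite_bigcup (I : Type) (D : set I) (Q : I -> set Lambda) E :
  F E -> finite_set D -> (forall i, D i -> eventually_finite E (Q i)) ->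
  eventually_finite E (\bigcup_(i in D) Q i).
Proof.
move=> FE fD efQ.
have /choice[K hK] : forall i, exists K,
    finite_set K /\ (D i -> finite_set (rho (E `\` K) `&` Q i)).
  move=> i; have [/efQ[K [fK hK]]|Di] := pselect (D i); first by exists K.
  by exists set0; split => //; exact: finite_set0.
have fK : finite_set (\bigcup_(i in D) K i).
  by apply: bigcup_finite => // i _; case: (hK i).
exists (\bigcup_(i in D) K i); split => //.
apply: (@sub_finite_set _ _ (\bigcup_(i in D) (rho (E `\` K i) `&` Q i))).
  move=> x [Ex [i Di Qx]]; exists i => //; split => //.
  apply: le_rho_setD Ex => //; first by case: (hK i).
  by move=> y Ky; exists i.
by apply: bigcup_finite => // i Di; apply: (hK i).2.
Qed.

Lemma thin_tail_avoid H E Q : F H -> F E -> thin H -> tail_sub H E ->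
  eventually_finite E Q -> exists K, finite_set K /\ rho (H `\` K) `<=` ~` Q.
Proof.
move=> FH FE thinH HE [K [fK fEQ]].
have [L [fL HL]] := HE K fK.
have [K' [fK' HK']] := thin_avoid_finite FH thinH fEQ.
have fLK' : finite_set (L `|` K') by rewrite finite_setU.
exists (L `|` K'); split => //.
move=> x Hx Qx; apply: (HK' x).
  by apply: le_rho_setD (FH) (FH) fK' fLK' _ _ _ Hx => // y; right.
split=> //; apply/HL; apply: le_rho_setD (FH) (FH) fL fLK' _ _ _ Hx => // y; left.
Qed.

Lemma S1_thin_refinement E B : S1 F rho -> F E -> I_rho F rho (~` B) ->
  exists H, [/\ F H, rho H `<=` B, thin H & tail_sub H E].
Proof.
move=> S1rho FE IB; have [G [FG GE HG]] := S1rho E FE.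
have [H [FH HGB Htail]] := HG _ IB; have [H' [FH' H'H thinH']] := rho_thin FH.
exists H'; split => //.
  by move=> x /(le_rho FH' FH H'H) /HGB[_ /contrapT].
move=> K fK; have [L [fL HL]] := Htail K fK.
exists L; split => // x /(le_rho_setD FH' FH fL fL H'H (@subset_refl _ _)) /HL.
exact: le_rho_setD.
Qed.

End PartitionRegular.

Lemma omega_plus_one_infinite : infinite_set [set: omega_plus_one].
Proof.
move=> fin; apply: infinite_nat.
have -> : [set: nat] = Some @^-1` [set: omega_plus_one] by [].
by apply: finite_preimage => // a b _ _ [].
Qed.

Lemma nbhs_omega (U : set omega_plus_one) : nbhs (None : omega_plus_one) U ->
  exists n, forall m, (n < m)%N -> U (Some m).
Proof.
rewrite itv_nbhsE => -[[l r] [/= oi]]; rewrite in_itv /= => /andP[Hl Hr] iU.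
exists (if l is BSide _ (Some k) then k else 0%N) => m km.
apply: iU; rewrite /= in_itv /=; apply/andP; split.
  case: l Hl km oi => [[] [k|]|[]] //= _ km _.
  rewrite lt_def; apply/andP; split; last exact: ltnW.
  by apply/eqP => -[mk]; rewrite mk ltnn in km.
by case: r Hr oi => [[] [k|]|[]].
Qed.

Lemma P_minus_FinBW_omega_plus_one (Lambda Omega : Type) (F : set (set Omega))
    (rho : set Omega -> set Lambda) :
  partition_regular F rho -> P_minus F rho -> FinBW F rho omega_plus_one.
Proof.
move=> PR PM f; pose A n := [set l | omega1_le (Some n) (f l)].
have [[n nI]|allI] := pselect (exists n, ~ I_rho F rho (A n `\` A n.+1)).
  have [G FG GA] : exists2 G, F G & rho G `<=` A n `\` A n.+1.
    by apply: contrapT => nG; apply: nI => G FG GA; apply: nG; exists G.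
  exists G; split => //; exists (Some n); apply: rho_converges_cst => l /GA[].
  rewrite /A /=; case: (f l) => [m|] //= nm /negP; rewrite -leqNgt => mn.
  by congr Some; apply/anti_leq; rewrite mn nm.
have AI n : I_rho F rho (A n `\` A n.+1).
  by apply: contrapT => nI; apply: allI; exists n.
have [|n l|G [FG GA]] := PM A _ _ AI.
- by apply/seteqP; split => // l _; rewrite /A /=; case: (f l).
- by rewrite /A /=; case: (f l) => //= m; exact: ltnW.
exists G; split => //; exists None => U /[dup] /nbhs_singleton UNone /nbhs_omega[n Hn].
have [K [fK GK]] := GA n.+1; exists K; split => // _ [l /GK + <-].
by rewrite /A /=; case: (f l) => // m nm; exact: Hn.
Qed.

Lemma FIN2_finite_columns (B : set (nat * nat)) i0 : (forall i, (i0 <= i)%N ->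
  exists2 K, finite_set K & forall j, B (i, j) -> K (i, j)) -> FIN2 B.
Proof.
move=> hB; exists i0 => i /hB[K fK BK].
apply: (@sub_finite_set _ _ (pair i @^-1` K)) => [j /BK //|].
by apply: finite_preimage => // a b _ _ [].
Qed.

Lemma katetov_FIN2_not_P_minus (Lambda Omega : Type) (F : set (set Omega))
    (rho : set Omega -> set Lambda) :
  katetov_le (ideal_plus FIN2) (@rho_ideal (nat * nat)) F rho -> ~ P_minus F rho.
Proof.
move=> [f Hf] PM; pose A n := [set l | (n <= (f l).1)%N].
have AI n : I_rho F rho (A n `\` A n.+1).
  move=> G FG GA; have [B [PB HB]] := Hf G FG.
  have [K [fK BK]] := HB set0 (finite_set0 _).
  apply/PB/(@FIN2_finite_columns _ n.+1) => i ni; exists K => // j Bij.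
  apply: contrapT => nK; have [l + fl] := BK (i, j) (conj Bij nK).
  by rewrite setD0 => /GA[_]; apply; rewrite /A /= fl.
have [|n l|G [FG GA]] := PM A _ _ AI.
- by apply/seteqP; split => // l _; rewrite /A /=.
- exact: ltnW.
have [B [PB HB]] := Hf G FG.
apply/PB/(@FIN2_finite_columns _ 0) => i _.
have [K [fK GK]] := GA i.+1; have [K2 [fK2 BK2]] := HB K fK.
exists K2 => // j Bij; apply: contrapT => nK.
have [l /GK + fl] := BK2 (i, j) (conj Bij nK).
by rewrite /A /= fl /= ltnn.
Qed.

Lemma hausdorff_open_separation (X : topologicalType) (x y : X) :
  hausdorff_space X -> x <> y ->
  exists V W, [/\ open V, open W, V x, W y & V `&` W = set0].
Proof.
rewrite open_hausdorff => hX /eqP /hX[[V W] /= [xV yW] [oV oW /eqP VW]].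
by exists V, W; split => //; rewrite -inE.
Qed.

Lemma infinite_split_open (X : topologicalType) (Y : set X) :
  hausdorff_space X -> infinite_set Y ->
  exists x U, [/\ Y x, open U, U x & infinite_set (Y `\` U)].
Proof.
move=> hX iY; have [a Ya] := infinite_setN0 iY.
have [b [Yb /eqP]] := infinite_setN0 (infinite_setD iY (finite_set1 a)).
rewrite eq_sym => /eqP ab.
have [V [W [oV oW Va Wb VW]]] := hausdorff_open_separation hX ab.
have [fW|iW] := pselect (finite_set (Y `\` W)); last by exists b, W.
exists a, V; split => // fV; apply: iY.
apply: (@sub_finite_set _ _ ((Y `\` V) `|` (Y `\` W))); last by rewrite finite_setU.
move=> y Yy; have [Vy|] := pselect (V y); last by left.
by right; split => // Wy; have : (V `&` W) y by []; rewrite VW.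
Qed.

Lemma infinite_hausdorff_discrete_seq (X : topologicalType) :
  hausdorff_space X -> infinite_set [set: X] ->
  exists (x : nat -> X) (U : nat -> set X),
    [/\ forall i, open (U i), forall i, U i (x i) & forall i j, (i < j)%N -> ~ U i (x j)].
Proof.
move=> hX iX; have [x0 _] := infinite_setN0 iX.
have /choice[step hstep] : forall Y : set X, exists p : X * set X, infinite_set Y ->
    [/\ Y p.1, open p.2, p.2 p.1 & infinite_set (Y `\` p.2)].
  move=> Y; have [/(infinite_split_open hX)[x [U hxU]]|fY] := pselect (infinite_set Y).
    by exists (x, U).
  by exists (x0, set0); move/fY.
pose Y n := iter n (fun Y => Y `\` (step Y).2) setT.
have iY n : infinite_set (Y n) by elim: n => //= n /hstep[].
have Ydec i j : (i <= j)%N -> Y j `<=` Y i.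
  elim: j => [|j IH]; first by rewrite leqn0 => /eqP ->.
  rewrite leq_eqVlt ltnS => /orP[/eqP -> //|/IH ij y [/ij]] //.
exists (fun n => (step (Y n)).1), (fun n => (step (Y n)).2).
split => [i|i|i j ij]; [by case: (hstep _ (iY i))..|].
by have [/(Ydec _ _ ij)[]] := hstep _ (iY j).
Qed.

Lemma nbhs_setC_finite (X : topologicalType) (y : X) (P : set X) :
  hausdorff_space X -> finite_set P -> nbhs y (~` (P `\ y)).
Proof.
move=> /hausdorff_accessible /accessible_finite_set_closed hX fP.
apply: open_nbhs_nbhs; split; last by move=> [_ /(_ erefl)].
by rewrite openC; apply: hX; exact: finite_setD.
Qed.

Section NotPminus.
Variables (Lambda Omega : Type) (F : set (set Omega)) (rho : set Omega -> set Lambda).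
Hypothesis PR : partition_regular F rho.
Variable A : nat -> set Lambda.
Hypotheses (A0 : A 0%N = setT) (Adec : forall n, A n.+1 `<=` A n)
  (AI : forall n, I_rho F rho (A n `\` A n.+1))
  (Anot : forall G, F G -> exists n, forall K, finite_set K -> ~ rho (G `\` K) `<=` A n).

Definition layer n := A n `\` A n.+1.

(* [level] is junk ([0]) on the points of [A n] for every [n]. *)
Definition level l := xget 0%N [set n | layer n l].

Lemma A_le m n : (m <= n)%N -> A n `<=` A m.
Proof.
elim: n => [|n IH]; first by rewrite leqn0 => /eqP ->.
by rewrite leq_eqVlt ltnS => /orP[/eqP -> //|/IH mn x /Adec /mn].
Qed.

Lemma I_rho_setC n : I_rho F rho (~` A n).
Proof.
elim: n => [|n IH]; first by rewrite A0 setCT; exact: I_rho0 PR.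
have sub : ~` A n.+1 `<=` ~` A n `|` (A n `\` A n.+1).
  by move=> x nAx; have [An|] := pselect (A n x); [right|left].
exact: I_rho_sub sub (I_rhoU PR IH (@AI n)).
Qed.

Lemma level_layer n l : layer n l -> level l = n.
Proof.
move=> [Anl nAnl]; apply: xget_unique => [//|m [Aml nAml]].
apply/eqP; rewrite eqn_leq; apply/andP; split; rewrite leqNgt; apply/negP.
  by move=> nm; apply: nAnl; apply: A_le nm _ Aml.
by move=> mn; apply: nAml; exact: A_le mn _ Anl.
Qed.

Lemma level_cases l : layer (level l) l \/ forall n, A n l.
Proof.
rewrite /level; case: xgetP => [n _ ln|nolayer]; [by left | right].
elim=> [|n IH]; first by rewrite A0.
by apply: contrapT => nAn; apply: (nolayer n).
Qed.

Lemma A_level l : A (level l) l.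
Proof. by case: (level_cases l) => [[]|]. Qed.

Lemma layer_of_setD n p l : A n l -> ~ A p l ->
  exists m, [/\ (n <= m)%N, (m < p)%N & layer m l].
Proof.
elim: p => [|p IH] Anl nApl; first by rewrite A0 in nApl; case: nApl.
have [Apl|/(IH Anl)[m [nm mp lm]]] := pselect (A p l); last first.
  by exists m; split => //; exact: ltnW.
exists p; split => //; rewrite leqNgt; apply/negP => pn.
by apply: nApl; exact: A_le pn _ Anl.
Qed.

Lemma no_tail_in_layer G K i : F G -> finite_set K ->
  ~ rho (G `\` K) `<=` layer i `|` [set l | forall n, A n l].
Proof.
move=> FG fK /(rho_cover PR (F_setD PR FG fK))[E [FE [Ei|Einf]]].
  exact: AI FE Ei.
have [n /(_ set0 (finite_set0 _))] := Anot FE; apply.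
by rewrite setD0 => l /Einf.
Qed.

Lemma infinite_not_FinBW (X : topologicalType) : hausdorff_space X -> infinite_set [set: X] ->
  ~ FinBW F rho X.
Proof.
move=> hX iX; have [x [U [oU Ux Usep]]] := infinite_hausdorff_discrete_seq hX iX.
have x_inj : injective x.
  move=> i j xij; apply/eqP; rewrite eqn_leq; apply/andP.
  by split; rewrite leqNgt; apply/negP => /Usep; [rewrite xij | rewrite -xij]; apply.
move=> /(_ (x \o level))[G [FG [y conv]]].
have [n Gn] := Anot FG.
pose V := ~` ((x @` `I_n) `\ y).
have nV : nbhs y V := nbhs_setC_finite y hX (finite_image x (finite_II n)).
have V_level l : V (x (level l)) -> (level l < n)%N -> x (level l) = y.
  by move=> Vl ln; apply: contrapT => nxy; apply: Vl; split => //; exists (level l).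
have [[i i_n xiy]|noi] := pselect (exists2 i, (i < n)%N & x i = y).
  have nVU : nbhs y (V `&` U i).
    by apply: filterI nV _; rewrite -xiy; apply: open_nbhs_nbhs; split.
  have [K [fK GK]] := conv _ nVU.
  apply: (no_tail_in_layer (i := i) FG fK) => l Gl.
  have [Vl Ul] := GK _ (imageP _ Gl).
  have levi : level l = i.
    have [ln|nl] := ltnP (level l) n; first by apply: x_inj; rewrite xiy; exact: V_level.
    by case: (Usep i (level l) (leq_trans i_n nl)).
  by case: (level_cases l) => [|]; [left; rewrite -levi | right].
have [K [fK GK]] := conv _ nV.
apply: (Gn K fK) => l Gl; have Vl := GK _ (imageP _ Gl).
have [ln|nl] := ltnP (level l) n; first by case: noi; exists (level l); last exact: V_level.
exact: A_le nl _ (A_level l).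
Qed.

Hypothesis S1rho : S1 F rho.

Lemma S1_layers_unbounded E n : F E ->
  exists m, (n <= m)%N /\ ~ eventually_finite rho E (layer m).
Proof.
move=> FE; have [H [FH HA thinH HE]] := S1_thin_refinement PR S1rho FE (@I_rho_setC n).
have [p Hp] := Anot FH.
apply: contrapT => /forallNP none.
have fnp : finite_set [set m | (n <= m < p)%N].
  by apply: (sub_finite_set _ (finite_II p)) => m /andP[].
have : eventually_finite rho E (\bigcup_(m in [set m | (n <= m < p)%N]) layer m).
  apply: (eventually_finite_bigcup PR FE fnp) => m /andP[nm _].
  by apply: contrapT => nef; apply: (none m).
move=> /(thin_tail_avoid PR FH FE thinH HE)[K [fK HK]].
apply: (Hp K fK) => l Hl; apply: contrapT => nApl.
have Anl : A n l by apply/HA; exact: (le_rho PR (F_setD PR FH fK) FH (@subDsetl _ H K)) _ Hl.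
have [m [nm mp lm]] := layer_of_setD Anl nApl.
by apply: (HK _ Hl); exists m => //; rewrite /= nm.
Qed.

Variables (eL : Lambda -> nat) (eO : Omega -> nat).
Hypotheses (eL_inj : injective eL) (eO_inj : injective eO).

Lemma S1_katetov_FIN2 : katetov_le (ideal_plus FIN2) (@rho_ideal (nat * nat)) F rho.
Proof.
exists (fun l => (level l, eL l)) => E FE.
have /choice[c hc] := fun k => S1_layers_unbounded k FE.
pose Om m := eO @^-1` `I_m.
have fOm m : finite_set (Om m).
  by apply: finite_preimage (finite_II m) => a b _ _ /eO_inj.
(* [b (k, j)] sits in layer [c k], its code is at least [j] (so column [c k] of
   [range g] is infinite) and it avoids [Om (k + j)] (so all but finitely many
   points of [range g] come from any given tail of [E]). *)
have /choice[b hb] : forall kj : nat * nat, exists l,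
    [/\ rho (E `\` Om (kj.1 + kj.2)) l, layer (c kj.1) l & (kj.2 <= eL l)%N].
  move=> [k j]; have [_ nef] := hc k.
  have inf : infinite_set (rho (E `\` Om (k + j)) `&` layer (c k)).
    by move=> fin; apply: nef; exists (Om (k + j)); split.
  have fj : finite_set (eL @^-1` `I_j).
    by apply: finite_preimage (finite_II j) => a a' _ _ /eL_inj.
  have [l [[El Ll] jl]] := infinite_setN0 (infinite_setD inf fj).
  by exists l; split => //; rewrite leqNgt; apply/negP.
pose g kj := (c kj.1, eL (b kj)).
exists (range g); split.
  move=> [i0 Hi0]; apply: nat_unbounded_infinite (Hi0 _ (hc i0).1) => j.
  by exists (eL (b (i0, j))); [exists (i0, j) | case: (hb (i0, j))].
move=> K1 fK1; have [m hm] := nat_finite_bounded (finite_image eO fK1).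
exists (g @` (`I_m `*` `I_m)); split.
  by apply: finite_image; apply: finite_setX; exact: finite_II.
move=> _ [[kj _ <-] nK2]; have [Eb Lb _] := hb kj.
exists (b kj); last by rewrite /g (level_layer Lb).
have mkj : (m <= kj.1 + kj.2)%N.
  rewrite leqNgt; apply/negP => lt; apply: nK2; exists kj => //.
  by split; [apply: leq_ltn_trans (leq_addr _ _) lt | apply: leq_ltn_trans (leq_addl _ _) lt].
apply: (le_rho_setD PR FE FE fK1 (fOm _) (@subset_refl _ E) _ Eb) => o K1o.
exact: leq_trans (hm _ (imageP _ K1o)) mkj.
Qed.
End NotPminus.

Lemma not_P_minus_witness (Lambda Omega : Type) (F : set (set Omega))
    (rho : set Omega -> set Lambda) :
  ~ P_minus F rho -> exists A : nat -> set Lambda, [/\ A 0%N = setT,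
    forall n, A n.+1 `<=` A n, forall n, I_rho F rho (A n `\` A n.+1) &
    forall G, F G -> exists n, forall K, finite_set K -> ~ rho (G `\` K) `<=` A n].
Proof.
move=> nPM; apply: contrapT => nA; apply: nPM => A A0 Adec AI.
apply: contrapT => nG; apply: nA; exists A; split => // G FG.
apply: contrapT => nn; apply: nG; exists G; split => // n.
by apply: contrapT => nK; apply: nn; exists n => K fK GK; apply: nK; exists K.
Qed.

Lemma card_nat_inj (T : Type) : ([set: T] #= [set: nat])%card ->
  exists e : T -> nat, injective e.
Proof. by case/pcard_eqP => e; exists e => a b; apply: (@inj _ _ _ e); rewrite inE. Qed.

Unset Implicit Arguments.

Theorem theorem3p1 (Lambda Omega : Type)
  (hL : ([set: Lambda] #= [set: nat])%card) (hO : ([set: Omega] #= [set: nat])%card)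
  (F : set (set Omega)) (rho : set Omega -> set Lambda) :
  partition_regular F rho ->
  let c1 := forall X : topologicalType, hausdorff_space X ->
              (FinBW F rho X <-> finite_set [set: X]) in
  let c2 := ~ FinBW F rho omega_plus_one in
  let c3 := ~ P_minus F rho in
  let c4 := katetov_le (ideal_plus FIN2) (@rho_ideal (nat * nat)) F rho in
  [/\ c1 <-> c2, c2 <-> c3, (c4 -> c1) & (S1 F rho -> (c1 <-> c4))].
Proof.
move=> PR c1 c2 c3 c4.
have c1c2 : c1 -> c2.
  rewrite /c1 /c2 => h1 /(h1 _ (@order_hausdorff _ _)).
  exact: omega_plus_one_infinite.
have c2c3 : c2 -> c3 by rewrite /c2 /c3 => h2 /(P_minus_FinBW_omega_plus_one PR).
have c3c1 : c3 -> c1.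
  rewrite /c3 /c1 => /not_P_minus_witness[A [A0 Adec AI Anot]] X hX.
  split; last exact: (finite_FinBW PR).
  move=> FBW; apply: contrapT => iX.
  exact (infinite_not_FinBW PR A0 Adec AI Anot hX iX FBW).
have c4c1 : c4 -> c1 by rewrite /c4 => /katetov_FIN2_not_P_minus; exact: c3c1.
split=> //; [by split=> // /c2c3/c3c1 | by split=> // /c3c1 | move=> S1rho].
split=> // /c1c2/c2c3/not_P_minus_witness[A [A0 Adec AI Anot]].
have [eL eL_inj] := card_nat_inj hL; have [eO eO_inj] := card_nat_inj hO.
exact (S1_katetov_FIN2 PR A0 Adec AI Anot S1rho eL_inj eO_inj).
Qed.
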